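(* Let $\mathbb G$ be a step-two Carnot group, let $n\geq\operatorname{rank}\mathbb G$ and $k\in\{0,\dots,n\}$ be integers, and let $\pi:\mathbb F_n\to\mathbb G$ be a surjective Carnot morphism. For $\eta\in\Lambda^{n-k}(\mathbb R^n)$ the following are equivalent: (a) there is a map $\psi_\eta:\mathbb G\to\Lambda^n(\mathbb R^n)$ such that $\psi_\eta\circ\pi=\widetilde\psi_\eta$; (b) $\widetilde\psi_\eta(\theta,\omega)=\widetilde\psi_\eta(\theta',\omega')$ for all $(\theta,\omega)\in\mathbb F_n$ and all $(\theta',\omega')\in(\theta,\omega)\cdot\ker\pi$; (c) $\eta\in\Lambda^{n-k}(\pi)$. Furthermore, when these conditions hold, the map $\psi_\eta$ in (a) is unique.
   Context: A step-two Carnot group is $\mathbb G=V_1\times V_2$ ($V_1,V_2$ finite-dimensional real vector spaces, $V_2\ne\{0\}$) with a bilinear skew-symmetric $[\cdot,\cdot]:V_1\times V_1\to V_2$ whose image spans $V_2$, and group law $(x,z)\cdot(x',z')=(x+x',z+z'+[x,x'])$; $\operatorname{rank}\mathbb G=\dim V_1$. $\mathbb F_n=\Lambda^1(\mathbb R^n)\times\Lambda^2(\mathbb R^n)$ with bracket $[\theta,\theta']=\theta\wedge\theta'$. A Carnot morphism $\pi:\mathbb G\to\mathbb G'$ is $\pi(x,z)=(\pi_1(x),\pi_2(z))$ with $\pi_1,\pi_2$ linear and $\pi_2([x,y])=[\pi_1(x),\pi_1(y)]'$. For $\eta\in\Lambda^m(\mathbb R^n)$, $\operatorname{Anh}^{1,2}_\wedge\eta:=\{(\theta,\omega)\in\mathbb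 F_n:\theta\wedge\eta=0,\ \omega\wedge\eta=0\}$ and $\Lambda^m(\pi):=\{\eta\in\Lambda^m(\mathbb R^n):\ker\pi\subset\operatorname{Anh}^{1,2}_\wedge\eta\}$. For $\eta\in\Lambda^{n-k}(\mathbb R^n)$, $\widetilde\psi_\eta:\mathbb F_n\to\Lambda^n(\mathbb R^n)$ is $\widetilde\psi_\eta(\theta,\omega)=\omega^{k/2}\wedge\eta$ if $k$ is even and $\theta\wedge\omega^{(k-1)/2}\wedge\eta$ if $k$ is odd ($\omega^j$ the exterior power, $\omega^0=1$). *)

From HB Require Import structures.
From mathcomp Require Import all_boot all_order all_algebra.
From mathcomp Require Import reals.
Set Implicit Arguments. Unset Strict Implicit. Unset Printing Implicit Defensive.
Import Order.TTheory GRing.Theory Num.Theory.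
Local Open Scope ring_scope.

Section Exterior.
Variable R : comNzRingType.
Variable n : nat.

(* Full exterior algebra Λ(R^n): coefficients on the standard basis e_A, A ⊆ {0..n-1}. *)
Local Notation ext := {ffun {set 'I_n} -> R}.

(* sign of e_A ∧ e_B = (-1)^{#{(a,b) ∈ A×B : b < a}} e_{A ∪ B} for disjoint A, B *)
Definition esign (A B : {set 'I_n}) : R :=
  (-1) ^+ #|[set p : 'I_n * 'I_n | [&& p.1 \in A, p.2 \in B & (p.2 < p.1)%N]]|.

Definition ext_wedge (a b : ext) : ext :=
  [ffun C : {set 'I_n} =>
     \sum_(A in powerset C) esign A (C :\: A) * a A * b (C :\: A)].

Definition ext_one : ext := [ffun A : {set 'I_n} => (A == set0)%:R].

Definition ext_pow (w : ext) (j : nat) : ext := iter j (ext_wedge w) ext_one.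

(* Index set of the basis of Λ^m(R^n): the m-element subsets of {0..n-1}. *)
Definition ksub (m : nat) := {A : {set 'I_n} | #|A| == m}.

Local Notation Lam m := {ffun ksub m -> R^o}.

Definition inj m (a : Lam m) : ext :=
  [ffun A : {set 'I_n} =>
     (if @insub _ (fun B : {set 'I_n} => #|B| == m) (ksub m) A is Some s
     then a s else 0 : R)].
Definition proj m (a : ext) : Lam m := [ffun A : ksub m => a (sval A)].

Definition wedge p q (a : Lam p) (b : Lam q) : Lam (p + q) :=
  proj (p + q) (ext_wedge (inj a) (inj b)).

End Exterior.

Notation ext R n := {ffun {set 'I_n} -> R}.
Notation Lam R n m := {ffun ksub n m -> R^o}.

(* The free step-two Carnot group F_n = Λ^1 × Λ^2 with bracket θ ∧ θ'. *)
Definition Fn (R : comNzRingType) (n : nat) := (Lam R n 1 * Lam R n 2)%type.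

Definition Fn_mul (R : comNzRingType) (n : nat) (p q : Fn R n) : Fn R n :=
  (p.1 + q.1, p.2 + q.2 + wedge p.1 q.1).

Definition step2_bracket (R : fieldType) (V1 V2 : vectType R)
    (br : V1 -> V1 -> V2) : Prop :=
  [/\ (forall y, linear (br ^~ y)),
      (forall x, linear (br x)),
      (forall x y, br x y = - br y x),
      (forall z : V2, exists (m : nat) (c : 'I_m -> R) (x y : 'I_m -> V1),
          z = \sum_(i < m) c i *: br (x i) (y i))
    & exists z : V2, z != 0].

Definition G_mul (R : ringType) (V1 V2 : lmodType R) (br : V1 -> V1 -> V2)
   (g h : V1 * V2) : V1 * V2 := (g.1 + h.1, g.2 + h.2 + br g.1 h.1).

Definition carnot_rank (R : fieldType) (V1 : vectType R) : nat := \dim (fullv : {vspace V1}).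

Definition carnot_map (R : comNzRingType) n (V1 V2 : Type)
  (pi1 : Lam R n 1 -> V1) (pi2 : Lam R n 2 -> V2) (p : Fn R n) : V1 * V2 :=
  (pi1 p.1, pi2 p.2).

Definition carnot_morphism (R : fieldType) n (V1 V2 : vectType R)
  (br : V1 -> V1 -> V2) (pi1 : Lam R n 1 -> V1) (pi2 : Lam R n 2 -> V2) : Prop :=
  [/\ linear pi1, linear pi2 &
      forall x y : Lam R n 1, pi2 (wedge x y) = br (pi1 x) (pi1 y)].

Definition in_ker (R : fieldType) n (V1 V2 : vectType R)
  (pi1 : Lam R n 1 -> V1) (pi2 : Lam R n 2 -> V2) (p : Fn R n) : Prop :=
  carnot_map pi1 pi2 p = (0, 0).

Definition in_Anh (R : comNzRingType) n m (eta : Lam R n m) (p : Fn R n) : Prop :=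
  wedge p.1 eta = 0 /\ wedge p.2 eta = 0.

Definition in_Lam_pi (R : fieldType) n m (V1 V2 : vectType R)
  (pi1 : Lam R n 1 -> V1) (pi2 : Lam R n 2 -> V2) (eta : Lam R n m) : Prop :=
  forall p : Fn R n, in_ker pi1 pi2 p -> in_Anh eta p.

Definition psi_tilde (R : comNzRingType) (n k : nat) (eta : Lam R n (n - k))
  (p : Fn R n) : Lam R n n :=
  if ~~ odd k then
    proj n (ext_wedge (ext_pow (inj p.2) k./2) (inj eta))
  else
    proj n (ext_wedge (inj p.1) (ext_wedge (ext_pow (inj p.2) k./2) (inj eta))).
Arguments psi_tilde {R n} k eta p.

(* Work in the exterior algebra of R^n, with Λ^m embedded by [inj]; then ψ~_η(θ, ω) is the
   top coefficient of θ^(k mod 2) ∧ ω^(k/2) ∧ η.  (a) <-> (b) because the fibres of the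
   surjection π are the cosets p · ker π.
   (c) -> (b): right translation by (θ, ω) replaces the 2-form ω_p by ω_p + ω + θ_p ∧ θ, and
   the added 2-form commutes with everything and is annihilated by η, as is θ.
   (b) -> (c): ker π is stable under (θ, ω) |-> (θ, 0) and (θ, ω) |-> (0, t ω).  To show that
   the top coefficient of e_U ∧ θ ∧ η (resp. e_U ∧ ω ∧ η) vanishes for each complementary
   index set U, evaluate the invariance at a point whose 2-form σ is symplectic on (most of) U,
   so that σ^j = c e_U with c ≠ 0.  Except for θ with k odd, the invariance says that the
   polynomial t |-> top coefficient of (σ + t ω')^(j+1) ∧ η is constant, and its linear
   coefficient (j+1) σ^j ∧ ω' ∧ η must vanish in characteristic 0. *)
From Pilot Require Import Defs.
From HB Require Import structures.
From mathcomp Require Import all_boot all_order all_algebra.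
From mathcomp Require Import reals ring zify.
From Stdlib Require Import FunctionalExtensionality.
Set Implicit Arguments. Unset Strict Implicit. Unset Printing Implicit Defensive.
Import Order.TTheory GRing.Theory Num.Theory.
Local Open Scope ring_scope.

Section ExteriorAlgebra.
Variables (R : comNzRingType) (n : nat).
(* A copy of [ext R n], so that the ring structure declared below (the wedge product) is not
   confused with the pointwise ring structure of [{ffun _ -> R}]. *)
Definition exterior := {ffun {set 'I_n} -> R^o}.
HB.instance Definition _ := GRing.Lmodule.on exterior.
Implicit Types (A B C : {set 'I_n}) (x y z : exterior) (c : R).

Definition blade A : exterior := [ffun B => (B == A)%:R].

Lemma bladeE A B : blade A B = (B == A)%:R.
Proof. by rewrite ffunE. Qed.

Definition ninv A B : nat := \sum_(a in A) \sum_(b in B) (b < a)%N.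

Lemma ninvE A B :
  ninv A B = \sum_a \sum_b ((a \in A) && (b \in B) && (b < a)%N : nat).
Proof.
rewrite /ninv big_mkcond; apply: eq_bigr => a _; rewrite big_mkcond.
case: (a \in A) => /=; last by rewrite big1.
by apply: eq_bigr => b _; case: (b \in B).
Qed.

Lemma esignE A B : esign R A B = (-1) ^+ ninv A B.
Proof.
rewrite /esign ninvE pair_big /= -sum1_card big_mkcond /=.
by congr (_ ^+ _); apply: eq_bigr => -[a b] _; rewrite inE /= andbA; case: (_ && _ && _).
Qed.

Lemma esign_neq0 A B : esign R A B != 0.
Proof. by rewrite esignE signr_eq0. Qed.

Lemma ninvUl A B C : [disjoint A & B] -> ninv (A :|: B) C = (ninv A C + ninv B C)%N.
Proof.
move=> dAB; rewrite !ninvE -big_split; apply: eq_bigr => a _.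
rewrite -big_split; apply: eq_bigr => b _ /=; rewrite in_setU.
by case aA: (a \in A); rewrite /= ?(disjointFr dAB aA) ?addn0.
Qed.

Lemma ninvUr A B C : [disjoint B & C] -> ninv A (B :|: C) = (ninv A B + ninv A C)%N.
Proof.
move=> dBC; rewrite !ninvE -big_split; apply: eq_bigr => a _.
rewrite -big_split; apply: eq_bigr => b _ /=; rewrite in_setU.
by case bB: (b \in B); rewrite /= ?(disjointFr dBC bB) ?andbF ?andbT ?addn0.
Qed.

Lemma ninvC A B : [disjoint A & B] -> (ninv A B + ninv B A)%N = (#|A| * #|B|)%N.
Proof.
move=> dAB; have -> : (#|A| * #|B| = \sum_a \sum_b ((a \in A) && (b \in B) : nat))%N.
  rewrite -sum_nat_const big_mkcond; apply: eq_bigr => a _ /=.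
  case: (a \in A) => /=; last by rewrite big1.
  by rewrite -sum1_card big_mkcond.
rewrite (ninvE B A) exchange_big ninvE -big_split; apply: eq_bigr => a _.
rewrite -big_split; apply: eq_bigr => b _ /=.
case aA: (a \in A); case bB: (b \in B) => //=.
case: (ltngtP a b) => // /val_inj eab.
by rewrite -eab (disjointFr dAB aA) in bB.
Qed.

Lemma esignC A B : [disjoint A & B] -> ~~ odd #|A| -> esign R A B = esign R B A.
Proof.
move=> dAB evenA; rewrite !esignE -signr_odd -[RHS]signr_odd; congr (_ ^+ _).
move/(congr1 odd): (ninvC dAB); rewrite oddD oddM (negbTE evenA) /=.
by case: (odd (ninv A B)); case: (odd (ninv B A)).
Qed.

Lemma esignUl A B C : [disjoint A & B] -> esign R (A :|: B) C = esign R A C * esign R B C.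
Proof. by move=> dAB; rewrite !esignE ninvUl // exprD. Qed.

Lemma esignUr A B C : [disjoint B & C] -> esign R A (B :|: C) = esign R A B * esign R A C.
Proof. by move=> dBC; rewrite !esignE ninvUr // exprD. Qed.

Lemma esign0l B : esign R set0 B = 1.
Proof. by rewrite esignE /ninv big_pred0 // => a; rewrite inE. Qed.

Lemma esign0r A : esign R A set0 = 1.
Proof. by rewrite esignE /ninv big1 // => a _; rewrite big_pred0 // => b; rewrite inE. Qed.

Local Notation "x \wedge y" := (@ext_wedge R n x y : exterior) (at level 40, left associativity).

Lemma ext_wedgeDl x y z : (x + y) \wedge z = x \wedge z + y \wedge z.
Proof.
apply/ffunP => C; rewrite !ffunE -big_split; apply: eq_bigr => A _.
by rewrite !ffunE mulrDr mulrDl.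
Qed.

Lemma ext_wedgeDr x y z : x \wedge (y + z) = x \wedge y + x \wedge z.
Proof.
apply/ffunP => C; rewrite !ffunE -big_split; apply: eq_bigr => A _.
by rewrite !ffunE mulrDr.
Qed.

Lemma ext_wedgeZl c x y : (c *: x) \wedge y = c *: (x \wedge y).
Proof.
apply/ffunP => C; rewrite !ffunE scaler_sumr; apply: eq_bigr => A _.
by rewrite !ffunE /GRing.scale /=; ring.
Qed.

Lemma ext_wedgeZr c x y : x \wedge (c *: y) = c *: (x \wedge y).
Proof.
apply/ffunP => C; rewrite !ffunE scaler_sumr; apply: eq_bigr => A _.
by rewrite !ffunE /GRing.scale /=; ring.
Qed.

Lemma ext_wedge0l y : 0 \wedge y = 0.
Proof. by apply/ffunP => C; rewrite !ffunE big1 // => A _; rewrite ffunE mulr0 mul0r. Qed.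

Lemma ext_wedge0r x : x \wedge 0 = 0.
Proof. by apply/ffunP => C; rewrite !ffunE big1 // => A _; rewrite ffunE mulr0. Qed.

Lemma ext_wedge_suml (I : Type) (r : seq I) (P : pred I) (F : I -> exterior) y :
  (\sum_(i <- r | P i) F i) \wedge y = \sum_(i <- r | P i) F i \wedge y.
Proof.
by elim/big_rec2: _ => [|i a b _ <-]; rewrite ?ext_wedge0l ?ext_wedgeDl.
Qed.

Lemma ext_wedge_sumr (I : Type) (r : seq I) (P : pred I) (F : I -> exterior) x :
  x \wedge (\sum_(i <- r | P i) F i) = \sum_(i <- r | P i) x \wedge F i.
Proof.
by elim/big_rec2: _ => [|i a b _ <-]; rewrite ?ext_wedge0r ?ext_wedgeDr.
Qed.

Lemma blade_decomp x : x = \sum_A x A *: blade A.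
Proof.
apply/ffunP => C; rewrite sum_ffunE (bigD1 C) //= big1 ?addr0 => [|A nAC].
  by rewrite !ffunE eqxx /GRing.scale /= mulr1.
by rewrite !ffunE eq_sym (negbTE nAC) /GRing.scale /= mulr0.
Qed.

Lemma ext_wedge_blades x y :
  x \wedge y = \sum_A \sum_B (x A * y B) *: (blade A \wedge blade B).
Proof.
rewrite {1}[x]blade_decomp ext_wedge_suml; apply: eq_bigr => A _.
rewrite ext_wedgeZl {1}[y]blade_decomp ext_wedge_sumr scaler_sumr.
by apply: eq_bigr => B _; rewrite ext_wedgeZr scalerA.
Qed.

Lemma blade_wedge A B :
  blade A \wedge blade B = if [disjoint A & B] then esign R A B *: blade (A :|: B) else 0.
Proof.
apply/ffunP => C; rewrite ffunE.
have [sAC|nsAC] := boolP (A \subset C); last first.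
  rewrite big1 => [|A' sA'C]; last first.
    rewrite bladeE; case: eqP => [eA|]; rewrite ?mulr0 ?mul0r //.
    by move: sA'C; rewrite powersetE eA (negbTE nsAC).
  case: ifP => _; rewrite !ffunE //; case: eqP => [eC|]; last by rewrite /GRing.scale /= mulr0.
  by move: nsAC; rewrite eC subsetUl.
rewrite (bigD1 A) ?powersetE //= big1 ?addr0 => [|A' /andP[_ nA]]; last first.
  by rewrite bladeE (negbTE nA) mulr0 mul0r.
rewrite !bladeE eqxx mulr1; case: ifPn => [dAB|ndAB]; rewrite !ffunE.
  have -> : (C :\: A == B) = (C == A :|: B).
    apply/eqP/eqP => [<-|->]; apply/setP => a; rewrite !inE.
      by case aA: (a \in A); rewrite //= (subsetP sAC).
    by case aA: (a \in A); rewrite //= (disjointFr dAB aA).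
  case: eqP => [->|_]; rewrite /GRing.scale /= ?mulr0 //.
  by rewrite setUC setDUl setDv setU0 (setDidPl _) // disjoint_sym.
case: eqP => [eB|]; rewrite ?mulr0 //.
by move: ndAB; rewrite -eB disjoint_sym disjoints_subset subsetDr.
Qed.

Lemma disjointsUl A B C : [disjoint A :|: B & C] = [disjoint A & C] && [disjoint B & C].
Proof. by rewrite -disjointU; apply: eq_disjoint => a; rewrite !inE. Qed.

Lemma disjointsUr A B C : [disjoint A & B :|: C] = [disjoint A & B] && [disjoint A & C].
Proof. by rewrite ![[disjoint A & _]]disjoint_sym disjointsUl. Qed.

Lemma blade_wedgeA A B C :
  blade A \wedge blade B \wedge blade C = blade A \wedge (blade B \wedge blade C).
Proof.
rewrite !blade_wedge.
case dAB: [disjoint A & B]; case dBC: [disjoint B & C];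
  rewrite ?ext_wedgeZl ?ext_wedgeZr ?ext_wedge0l ?ext_wedge0r ?blade_wedge
          ?disjointsUl ?disjointsUr ?dAB ?dBC ?andbF ?scaler0 //=.
case dAC: [disjoint A & C]; rewrite /= ?scaler0 // !scalerA setUA.
by rewrite esignUl // esignUr //; congr (_ *: _); ring.
Qed.

Lemma ext_wedgeA x y z : x \wedge y \wedge z = x \wedge (y \wedge z).
Proof.
rewrite [x]blade_decomp !ext_wedge_suml; apply: eq_bigr => A _.
rewrite !ext_wedgeZl; congr (_ *: _).
rewrite [y]blade_decomp !(ext_wedge_suml, ext_wedge_sumr); apply: eq_bigr => B _.
rewrite !(ext_wedgeZl, ext_wedgeZr); congr (_ *: _).
rewrite [z]blade_decomp !ext_wedge_sumr; apply: eq_bigr => C _.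
by rewrite !ext_wedgeZr blade_wedgeA.
Qed.

Lemma ext_wedge1l x : blade set0 \wedge x = x.
Proof.
rewrite [RHS]blade_decomp ext_wedge_blades (bigD1 set0) //= [X in _ + X]big1 ?addr0.
  apply: eq_bigr => B _; rewrite bladeE eqxx mul1r blade_wedge.
  by rewrite -setI_eq0 set0I eqxx set0U esign0l scale1r.
by move=> A nA; rewrite big1 // => B _; rewrite bladeE (negbTE nA) mul0r scale0r.
Qed.

Lemma ext_wedge1r x : x \wedge blade set0 = x.
Proof.
rewrite [RHS]blade_decomp ext_wedge_blades; apply: eq_bigr => A _.
rewrite (bigD1 set0) //= big1 ?addr0 => [|B nB]; last first.
  by rewrite bladeE (negbTE nB) mulr0 scale0r.
by rewrite bladeE eqxx mulr1 blade_wedge -setI_eq0 setI0 eqxx setU0 esign0r scale1r.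
Qed.

Lemma blade_neq0 A : blade A != 0.
Proof. by apply/eqP => /ffunP/(_ A)/eqP; rewrite !ffunE eqxx oner_eq0. Qed.

HB.instance Definition _ := GRing.Zmodule_isNzRing.Build exterior
  (fun x y z => esym (ext_wedgeA x y z)) ext_wedge1l ext_wedge1r
  ext_wedgeDl ext_wedgeDr (blade_neq0 set0).

Lemma ext_wedge_scalerAl c (x y : exterior) : c *: (x \wedge y) = (c *: x) \wedge y.
Proof. by rewrite ext_wedgeZl. Qed.
HB.instance Definition _ := GRing.Lmodule_isLalgebra.Build R exterior ext_wedge_scalerAl.

Lemma ext_wedge_scalerAr c (x y : exterior) : c *: (x \wedge y) = x \wedge (c *: y).
Proof. by rewrite ext_wedgeZr. Qed.
HB.instance Definition _ := GRing.Lalgebra_isAlgebra.Build R exterior ext_wedge_scalerAr.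

Lemma ext_mulE (x y : exterior) : x * y = x \wedge y.
Proof. by []. Qed.

Lemma blade_mul A B : [disjoint A & B] ->
  blade A * blade B = esign R A B *: blade (A :|: B).
Proof. by move=> dAB; rewrite ext_mulE blade_wedge dAB. Qed.

Lemma ext_powE (x : exterior) j : @ext_pow R n x j = x ^+ j.
Proof. by elim: j => [|j IHj] //=; rewrite exprS -IHj. Qed.

Implicit Types (u v : exterior) (d e : nat).

Definition homogeneous d u := forall A, #|A| != d -> u A = 0.

Lemma homogeneous0 d : homogeneous d 0.
Proof. by move=> A _; rewrite ffunE. Qed.

Lemma homogeneousD d u v : homogeneous d u -> homogeneous d v -> homogeneous d (u + v).
Proof. by move=> hu hv A hA; rewrite ffunE hu // hv // addr0. Qed.

Lemma homogeneous_blade A : homogeneous #|A| (blade A).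
Proof. by move=> B; rewrite bladeE; have [->|//] := eqVneq B A; rewrite eqxx. Qed.

Lemma homogeneousM d e u v :
  homogeneous d u -> homogeneous e v -> homogeneous (d + e) (u * v).
Proof.
move=> hu hv C hC; rewrite ext_mulE ffunE big1 // => A; rewrite powersetE => sAC.
have [hA|] := eqVneq #|A| d; last by move=> /hu ->; rewrite mulr0 mul0r.
rewrite hv ?mulr0 // cardsD (setIidPr sAC); apply: contra hC => /eqP hCA.
by have := subset_leq_card sAC; rewrite -hA -hCA; lia.
Qed.

Lemma homogeneousX d u j : homogeneous d u -> homogeneous (d * j) (u ^+ j).
Proof.
move=> hu; elim: j => [|j IHj]; last by rewrite exprS mulnS; apply: homogeneousM.
by rewrite muln0; have := @homogeneous_blade set0; rewrite cards0.
Qed.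

Lemma blade_comm_even A B : ~~ odd #|A| -> GRing.comm (blade A) (blade B).
Proof.
move=> evenA; rewrite /GRing.comm !ext_mulE !blade_wedge disjoint_sym setUC.
by case: ifP => // dAB; rewrite esignC // disjoint_sym.
Qed.

Lemma homogeneous_comm_even d u v : homogeneous d u -> ~~ odd d -> GRing.comm u v.
Proof.
move=> hu evend; rewrite /GRing.comm !ext_mulE ext_wedge_blades ext_wedge_blades.
rewrite [RHS]exchange_big /=; apply: eq_bigr => A _; apply: eq_bigr => B _.
have [hA|] := eqVneq #|A| d; last by move=> /hu ->; rewrite mul0r mulr0 !scale0r.
by rewrite mulrC -!ext_mulE blade_comm_even // hA.
Qed.

Lemma exprD_sqr0 (x b : exterior) j : GRing.comm x b -> b * b = 0 ->
  (x + b) ^+ j.+1 = x ^+ j.+1 + (x ^+ j * b) *+ j.+1.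
Proof.
move=> cxb bb; rewrite exprDn_comm // big_ord_recl big_ord_recl /= big1 => [|i _].
  by rewrite subn0 expr0 mulr1 bin0 mulr1n expr1 subn1 bin1 addr0.
by rewrite /bump /= !add1n !exprS [b * (b * _)]mulrA bb !mul0r mulr0 mul0rn.
Qed.

End ExteriorAlgebra.

Section Graded.
Variables (R : comNzRingType) (n : nat).
Local Notation exterior := (exterior R n).
Local Notation inj a := (@Defs.inj R n _ a : exterior).
Local Notation proj m := (@proj R n m).

Section Degree.
Variable m : nat.
Implicit Types (a b : Lam R n m) (x : exterior).

Lemma homogeneous_inj a : homogeneous m (inj a).
Proof. by move=> A hA; rewrite ffunE; case: insubP => // s /eqP hs; rewrite hs eqxx in hA. Qed.

Lemma proj_injK a : proj m (inj a) = a.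
Proof.
apply/ffunP => s; rewrite !ffunE; case: insubP => [s' _ e|]; last by rewrite (valP s).
by congr (a _); apply: val_inj.
Qed.

Lemma inj_projK x : homogeneous m x -> inj (proj m x) = x.
Proof.
move=> hx; apply/ffunP => A; rewrite ffunE.
by case: insubP => [s _ <-|hA]; rewrite ?ffunE // hx.
Qed.

Lemma inj0 : inj (0 : Lam R n m) = 0.
Proof. by apply/ffunP => A; rewrite !ffunE; case: insubP => *; rewrite ?ffunE. Qed.

Lemma injD a b : inj (a + b) = inj a + inj b.
Proof. by apply/ffunP => A; rewrite !ffunE; case: insubP => *; rewrite ?ffunE ?addr0. Qed.

Lemma injZ c a : inj (c *: a) = c *: inj a.
Proof. by apply/ffunP => A; rewrite !ffunE; case: insubP => *; rewrite ?ffunE ?scaler0. Qed.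

End Degree.

Lemma inj_wedge p q (a : Lam R n p) (b : Lam R n q) :
  inj (wedge a b) = inj a * inj b.
Proof. by rewrite /wedge inj_projK //; apply: homogeneousM; apply: homogeneous_inj. Qed.

Lemma wedge0l p q (b : Lam R n q) : wedge (0 : Lam R n p) b = 0.
Proof. by apply: (can_inj (@proj_injK _)); rewrite inj_wedge !inj0 mul0r. Qed.

Lemma wedge0r p q (a : Lam R n p) : wedge a (0 : Lam R n q) = 0.
Proof. by apply: (can_inj (@proj_injK _)); rewrite inj_wedge !inj0 mulr0. Qed.

Lemma psi_tildeE k (eta : Lam R n (n - k)) (p : Fn R n) :
  psi_tilde k eta p = proj n ((if odd k then inj p.1 else 1) *
                              (inj p.2 ^+ k./2 * inj eta)).
Proof. by rewrite /psi_tilde !ext_powE; case: odd; rewrite ?mul1r. Qed.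

Lemma top_coef_eq (x y : exterior) : proj n x = proj n y -> x setT = y setT.
Proof.
have hT : #|[set: 'I_n]| == n by rewrite cardsT card_ord.
by move/ffunP/(_ (exist _ setT hT)); rewrite !ffunE.
Qed.

Lemma psi_tilde_mul_anh k (eta : Lam R n (n - k)) (p q : Fn R n) :
  in_Anh eta q -> psi_tilde k eta (Fn_mul p q) = psi_tilde k eta p.
Proof.
case=> q1eta q2eta.
have {}q1eta : inj q.1 * inj eta = 0 by rewrite -inj_wedge q1eta inj0.
have {}q2eta : inj q.2 * inj eta = 0 by rewrite -inj_wedge q2eta inj0.
rewrite !psi_tildeE /Fn_mul /= !injD (@inj_wedge 1 1) -addrA.
set x : exterior := inj p.2; set y : exterior := inj q.2 + inj p.1 * inj q.1.
have y_eta : y * inj eta = 0 by rewrite mulrDl q2eta -mulrA q1eta mulr0 addr0.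
have hy : homogeneous 2 y.
  by apply: homogeneousD (homogeneous_inj _) (homogeneousM (homogeneous_inj p.1) (homogeneous_inj q.1)).
have xy_eta j : (x + y) ^+ j * inj eta = x ^+ j * inj eta.
  elim: j => [|j IHj]; rewrite ?expr0 // exprS -mulrA IHj mulrDl.
  rewrite exprS -mulrA [y * _]mulrA (homogeneous_comm_even _ hy) //.
  by rewrite -mulrA y_eta mulr0 addr0.
rewrite xy_eta; case: odd; rewrite ?mulrDl //.
rewrite [X in _ + X]mulrA -(homogeneous_comm_even _ (homogeneousX (homogeneous_inj p.2))).
  by rewrite -mulrA q1eta mulr0 addr0.
by rewrite oddM.
Qed.

End Graded.

Section CharacteristicZero.
Variables (R : idomainType) (n : nat).
Hypothesis pcharR0 : [pchar R] =i pred0.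
Local Notation exterior := (exterior R n).
Local Notation blade := (@blade R n).
Local Notation inj a := (@Defs.inj R n _ a : exterior).
Local Notation proj m := (@proj R n m).
Implicit Types (U S : {set 'I_n}) (u v : exterior).

Let natr_eq0 m : (m%:R == 0 :> R) = (m == 0)%N.
Proof. exact: (pcharf0P R).1 pcharR0 m. Qed.

Let natr_eq a b : (a%:R == b%:R :> R) = (a == b).
Proof.
wlog le_ab : a b / (a <= b)%N => [wlogH|].
  by case: (leqP a b) => [|/ltnW] /wlogH //; rewrite eq_sym [b == a]eq_sym.
by rewrite eq_sym -subr_eq0 -natrB // natr_eq0 subn_eq0 eqn_leq le_ab.
Qed.

Lemma scaler_coef_eq0 c u S : c != 0 -> (c *: u) S = 0 -> u S = 0.
Proof. by move=> c0; rewrite ffunE => /eqP; rewrite mulf_eq0 (negbTE c0) => /eqP. Qed.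

Lemma symplectic_power m U : #|U| = (2 * m)%N ->
  exists (om : exterior) (c : R),
    [/\ homogeneous 2 om, c != 0, om ^+ m = c *: blade U & om ^+ m.+1 = 0].
Proof.
elim: m U => [|m IHm] U hU.
  exists 0, 1; split; rewrite ?expr1 ?oner_eq0 //; first exact: homogeneous0.
  by move/eqP: hU; rewrite cards_eq0 => /eqP ->; rewrite expr0 scale1r.
have [a aU] : exists a, a \in U by apply/card_gt0P; rewrite hU.
have [b bU] : exists b, b \in U :\ a.
  by apply/card_gt0P; move: (cardsD1 a U); rewrite aU hU; lia.
have hU' : #|U :\ a :\ b| = (2 * m)%N.
  by move: (cardsD1 a U) (cardsD1 b (U :\ a)); rewrite aU bU hU; lia.
set U' := U :\ a :\ b; set P := [set a; b].
have [om [c [hom c0 omm omm1]]] := IHm _ hU'.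
have ba : b != a by move: bU; rewrite !inE => /andP[].
have hP : homogeneous 2 (blade P).
  by have := @homogeneous_blade R n P; rewrite cards2 eq_sym ba.
have PP : blade P * blade P = 0.
  rewrite ext_mulE blade_wedge; case: ifP => // /pred0P /(_ a).
  by rewrite /= !inE eqxx.
have dU'P : [disjoint U' & P].
  rewrite -setI_eq0; apply/eqP/setP => x; rewrite !inE.
  by case: (x == a); case: (x == b); rewrite /= ?andbF.
have U'P : U' :|: P = U by rewrite setUC -setUA setD1K // setD1K.
have cP := homogeneous_comm_even (blade P) hom isT.
exists (om + blade P), (c * m.+1%:R * esign R U' P); split.
- exact: homogeneousD.
- by rewrite !mulf_neq0 ?esign_neq0 // natr_eq0.
- rewrite exprD_sqr0 // omm1 add0r omm -scalerAl blade_mul // U'P.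
  by rewrite -scaler_nat !scalerA; congr (_ *: _); ring.
- by rewrite exprD_sqr0 // exprS omm1 mulr0 mul0r mul0rn addr0.
Qed.

Lemma top_coef_blade_mul U v : (blade U * v) setT = esign R U (~: U) * v (~: U).
Proof.
rewrite ext_mulE ffunE (bigD1 U) ?powersetE ?subsetT //= big1 ?addr0 => [|A /andP[_ nA]].
  by rewrite bladeE eqxx mulr1 setTD.
by rewrite bladeE (negbTE nA) mulr0 mul0r.
Qed.

Lemma homogeneous_eq0_top_coef d v : homogeneous d v ->
  (forall U, (#|U| + d)%N = n -> (blade U * v) setT = 0) -> v = 0.
Proof.
move=> hv vU; apply/ffunP => S; rewrite ffunE.
have [hS|/hv//] := eqVneq #|S| d.
have leSn : (#|S| <= n)%N by rewrite -[n in (_ <= n)%N]card_ord max_card.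
have := vU (~: S); rewrite top_coef_blade_mul setCK cardsCs setCK card_ord -hS.
rewrite subnK // => /(_ erefl) /eqP.
by rewrite mulf_eq0 (negbTE (esign_neq0 _ _ _)) => /eqP.
Qed.

Lemma comm_linear_coef_eq0 (x y L M : exterior) j S : GRing.comm x y ->
  (forall t : R, (L * (x + t *: y) ^+ j.+1 * M) S = (L * x ^+ j.+1 * M) S) ->
  (L * (x ^+ j * y) * M) S = 0.
Proof.
move=> cxy const.
pose d i := (L * (x ^+ (j.+1 - i) * y ^+ i) * M) S.
have expand t : (L * (x + t *: y) ^+ j.+1 * M) S = \sum_(i < j.+2) (d i * 'C(j.+1, i)%:R) * t ^+ i.
  rewrite exprDn_comm; last by rewrite /GRing.comm -scalerAr -scalerAl cxy.
  rewrite mulr_sumr mulr_suml sum_ffunE; apply: eq_bigr => i _.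
  rewrite exprZn -scalerAr mulrnAr -scalerAr mulrnAl -scalerAl ffunMnE ffunE.
  by rewrite -mulr_natr /d /GRing.scale /=; ring.
pose p := \poly_(i < j.+2) (d i * 'C(j.+1, i)%:R) - (d 0%N)%:P.
have p0 : p = 0.
  apply: (@roots_geq_poly_eq0 _ p [seq i%:R | i <- iota 0 j.+3]).
  - apply/allP => _ /mapP [i _ ->]; rewrite /root /p hornerD hornerN horner_poly hornerC.
    by rewrite -expand const /d subn0 expr0 mulr1 subrr.
  - by rewrite map_inj_uniq ?iota_uniq // => a b /eqP; rewrite natr_eq => /eqP.
  - rewrite size_map size_iota (leq_trans (size_polyD _ _)) // geq_max size_polyN.
    by rewrite (leq_trans (size_poly _ _)) // (leq_trans (size_polyC_leq1 _)).
move/(congr1 (coefp 1)): p0; rewrite /= coefB coef_poly coefC /= coef0 subr0 bin1.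
by move/eqP; rewrite mulf_eq0 natr_eq0 orbF /d subn1 expr1 => /eqP.
Qed.

Lemma symplectic_linear_coef_eq0 (L y M : exterior) j U :
  #|U| = (2 * j)%N -> homogeneous 2 y ->
  (forall (om : exterior) (t : R), homogeneous 2 om ->
     (L * (om + t *: y) ^+ j.+1 * M) setT = (L * om ^+ j.+1 * M) setT) ->
  (L * blade U * y * M) setT = 0.
Proof.
move=> hU hy const; have [om [c [hom c0 omj _]]] := symplectic_power hU.
have := comm_linear_coef_eq0 (homogeneous_comm_even y hom isT) (fun t => const om t hom).
rewrite omj -scalerAl -scalerAr -scalerAl mulrA.
exact: scaler_coef_eq0 c0.
Qed.

Lemma blade_setD1_mul U a : a \in U ->
  blade [set a] * blade (U :\ a) = esign R [set a] (U :\ a) *: blade U /\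
  blade (U :\ a) * blade [set a] = esign R (U :\ a) [set a] *: blade U.
Proof.
move=> aU; rewrite !blade_mul ?setD1K 1?setUC ?setD1K //.
  by rewrite disjoint_sym disjoints1 setD11.
by rewrite disjoints1 setD11.
Qed.

Section InvarianceForcesAnnihilation.
Variables (k : nat) (eta : Lam R n (n - k)).
Hypothesis le_kn : (k <= n)%N.
Local Notation psi := (psi_tilde k eta).

Let inj_proj_blade1 a : inj (proj 1 (blade [set a])) = blade [set a].
Proof. by rewrite inj_projK //; have := @homogeneous_blade R n [set a]; rewrite cards1. Qed.

Lemma wedge1_eq0_of_invariance (theta : Lam R n 1) :
  (forall p, psi (Fn_mul p (theta, 0)) = psi p) -> wedge theta eta = 0.
Proof.
move=> inv; apply: (can_inj (@proj_injK R n _)); rewrite inj_wedge inj0.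
apply: (homogeneous_eq0_top_coef (homogeneousM (homogeneous_inj theta) (homogeneous_inj eta))).
move=> U hU; rewrite mulrA.
have := odd_double_half k; rewrite -muln2.
case: (boolP (odd k)) => [odd_k|even_k] /= kE.
  have {}hU : #|U| = (2 * k./2)%N by lia.
  have [om [c [hom c0 omj _]]] := symplectic_power hU.
  have := inv (0, proj 2 om); rewrite !psi_tildeE odd_k /Fn_mul /= wedge0l add0r !addr0.
  rewrite inj0 mul0r (inj_projK hom) => /top_coef_eq; rewrite [RHS]ffunE omj.
  rewrite -scalerAl -scalerAr => /(scaler_coef_eq0 c0) <-.
  rewrite (homogeneous_comm_even _ (@homogeneous_blade R n U)) -?mulrA //.
  by rewrite hU oddM.
case Ej: k./2 => [|j]; rewrite Ej in kE; first lia.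
have [a aU] : exists a, a \in U by apply/card_gt0P; lia.
have hU' : #|U :\ a| = (2 * j)%N by move: (cardsD1 a U); rewrite aU; lia.
pose y := blade [set a] * inj theta.
have hy : homogeneous 2 y.
  by have := homogeneousM (@homogeneous_blade R n [set a]) (homogeneous_inj theta); rewrite cards1.
have const om t : homogeneous 2 om ->
    (1 * (om + t *: y) ^+ j.+1 * inj eta) setT = (1 * om ^+ j.+1 * inj eta) setT.
  move=> hom; apply: top_coef_eq; rewrite !mul1r.
  have := inv (t *: proj 1 (blade [set a]), proj 2 om).
  rewrite !psi_tildeE (negbTE even_k) Ej /Fn_mul /= addr0 injD (@inj_wedge _ _ 1 1) injZ.
  by rewrite inj_proj_blade1 (inj_projK hom) !mul1r -scalerAl.
have := symplectic_linear_coef_eq0 hU' hy const.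
rewrite mul1r /y mulrA (blade_setD1_mul aU).2 -!scalerAl.
exact: scaler_coef_eq0 (esign_neq0 _ _ _).
Qed.

Lemma wedge2_eq0_of_invariance (omega : Lam R n 2) :
  (forall p t, psi (Fn_mul p (0, t *: omega)) = psi p) -> wedge omega eta = 0.
Proof.
move=> inv; apply: (can_inj (@proj_injK R n _)); rewrite inj_wedge inj0.
apply: (homogeneous_eq0_top_coef (homogeneousM (homogeneous_inj omega) (homogeneous_inj eta))).
move=> U hU; rewrite mulrA.
have := odd_double_half k; rewrite -muln2.
case: (boolP (odd k)) => [odd_k|even_k] /= kE; case Ej: k./2 => [|j];
  rewrite Ej in kE; [lia | | lia | ].
  have [a aU] : exists a, a \in U by apply/card_gt0P; lia.
  have hU' : #|U :\ a| = (2 * j)%N by move: (cardsD1 a U); rewrite aU; lia.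
  have const om t : homogeneous 2 om ->
      (blade [set a] * (om + t *: inj omega) ^+ j.+1 * inj eta) setT =
      (blade [set a] * om ^+ j.+1 * inj eta) setT.
    move=> hom; apply: top_coef_eq; rewrite -!mulrA.
    have := inv (proj 1 (blade [set a]), proj 2 om) t.
    rewrite !psi_tildeE odd_k Ej /Fn_mul /= wedge0r !addr0 injD injZ.
    by rewrite inj_proj_blade1 (inj_projK hom).
  have := symplectic_linear_coef_eq0 hU' (homogeneous_inj omega) const.
  rewrite (blade_setD1_mul aU).1 -!scalerAl.
  exact: scaler_coef_eq0 (esign_neq0 _ _ _).
have {}hU : #|U| = (2 * j)%N by lia.
have const om t : homogeneous 2 om ->
    (1 * (om + t *: inj omega) ^+ j.+1 * inj eta) setT = (1 * om ^+ j.+1 * inj eta) setT.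
  move=> hom; apply: top_coef_eq; rewrite !mul1r.
  have := inv (0, proj 2 om) t.
  rewrite !psi_tildeE (negbTE even_k) Ej /Fn_mul /= wedge0l !addr0 injD injZ.
  by rewrite (inj_projK hom) !mul1r.
by have := symplectic_linear_coef_eq0 hU (homogeneous_inj omega) const; rewrite mul1r.
Qed.

End InvarianceForcesAnnihilation.
End CharacteristicZero.

Lemma linear_map0 (R : pzRingType) (U V : lmodType R) (f : U -> V) : linear f -> f 0 = 0.
Proof. by move=> lin_f; rewrite -[0 in LHS](subrr 0) (zmod_morphism_linear lin_f) subrr. Qed.

Section CarnotMorphism.
Variables (R : fieldType) (V1 V2 : vectType R) (br : V1 -> V1 -> V2) (n : nat).
Variables (pi1 : Lam R n 1 -> V1) (pi2 : Lam R n 2 -> V2).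
Hypothesis br_linear : forall x, linear (br x).
Hypothesis pi_morph : carnot_morphism br pi1 pi2.
Local Notation pi := (carnot_map pi1 pi2).
Local Notation ker := (in_ker pi1 pi2).

Let pi1_linear := let: And3 l _ _ := pi_morph in l.
Let pi2_linear := let: And3 _ l _ := pi_morph in l.
Let pi2_wedge := let: And3 _ _ e := pi_morph in e.

Lemma in_kerP q : ker q <-> pi1 q.1 = 0 /\ pi2 q.2 = 0.
Proof. by rewrite /in_ker /carnot_map; split=> [[-> ->]|[-> ->]]. Qed.

Lemma in_ker_fst q : ker q -> ker (q.1, 0).
Proof. by case/in_kerP => pq1 _; apply/in_kerP; rewrite pq1 (linear_map0 pi2_linear). Qed.

Lemma in_ker_sndZ q t : ker q -> ker (0, t *: q.2).
Proof.
case/in_kerP => _ pq2; apply/in_kerP; rewrite (linear_map0 pi1_linear).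
by rewrite (scalable_linear pi2_linear) pq2 /= scaler0.
Qed.

Lemma carnot_map_mul_ker p q : ker q -> pi (Fn_mul p q) = pi p.
Proof.
case/in_kerP => pq1 pq2; rewrite /carnot_map /Fn_mul /=.
have [_ pi1D] := GRing.semilinear_linear pi1_linear.
have [_ pi2D] := GRing.semilinear_linear pi2_linear.
by rewrite !pi2D pi1D pi2_wedge pq1 pq2 (linear_map0 (br_linear _)) !addr0.
Qed.

Lemma carnot_map_fibre p p' : pi p' = pi p -> exists2 q, ker q & p' = Fn_mul p q.
Proof.
case: p' => x y [e1 e2].
have pi1B := zmod_morphism_linear pi1_linear.
have pi2B := zmod_morphism_linear pi2_linear.
exists (x - p.1, y - p.2 - wedge p.1 (x - p.1)).
  apply/in_kerP; rewrite /= pi1B e1 subrr !pi2B e2 subrr pi2_wedge pi1B e1 subrr.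
  by rewrite (linear_map0 (br_linear _)) subrr.
by rewrite /Fn_mul /= addrC subrK -addrA subrK addrC subrK.
Qed.

Lemma factors_through_carnot_map (T : Type) (f : Fn R n -> T) :
  (forall g, exists p, pi p = g) ->
  (exists psi, forall p, psi (pi p) = f p) <-> (forall p q, ker q -> f p = f (Fn_mul p q)).
Proof.
move=> pi_surj; split=> [[psi psiE] p q Kq|f_inv].
  by rewrite -!psiE carnot_map_mul_ker.
have pick g : exists p, pi p == g by have [p <-] := pi_surj g; exists p.
exists (fun g => f (xchoose (pick g))) => p.
have [q Kq ->] := carnot_map_fibre (eqP (xchooseP (pick (pi p)))).
by rewrite -f_inv.
Qed.

End CarnotMorphism.

Theorem lemma5p6 (R : realType) (V1 V2 : vectType R) (br : V1 -> V1 -> V2)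
  (hG : step2_bracket br) (n k : nat)
  (hn : (carnot_rank V1 <= n)%N) (hk : (k <= n)%N)
  (pi1 : Lam R n 1 -> V1) (pi2 : Lam R n 2 -> V2)
  (hpi : carnot_morphism br pi1 pi2)
  (hsurj : forall g : V1 * V2, exists p : Fn R n, carnot_map pi1 pi2 p = g)
  (eta : Lam R n (n - k)) :
  let A := exists psi : V1 * V2 -> Lam R n n,
             forall p : Fn R n, psi (carnot_map pi1 pi2 p) = psi_tilde k eta p in
  let B := forall p q : Fn R n, in_ker pi1 pi2 q ->
             psi_tilde k eta p = psi_tilde k eta (Fn_mul p q) in
  let C := in_Lam_pi pi1 pi2 eta in
  [/\ A <-> B, B <-> C &
      (A \/ B \/ C) ->
      forall psi psi' : V1 * V2 -> Lam R n n,
        (forall p : Fn R n, psi (carnot_map pi1 pi2 p) = psi_tilde k eta p) ->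
        (forall p : Fn R n, psi' (carnot_map pi1 pi2 p) = psi_tilde k eta p) ->
        psi = psi'].
Proof.
move=> A B C; have [_ br_linear _ _ _] := hG.
split.
- exact: factors_through_carnot_map.
- split=> [psi_inv q Kq | anh p q Kq]; last by rewrite psi_tilde_mul_anh //; apply: anh.
  split.
  + apply: (wedge1_eq0_of_invariance (@pchar_num R) hk) => p.
    by apply/esym/psi_inv; exact: (in_ker_fst hpi Kq).
  + apply: (wedge2_eq0_of_invariance (@pchar_num R) hk) => p t.
    by apply/esym/psi_inv; exact: (in_ker_sndZ hpi t Kq).
- move=> _ psi psi' psiE psi'E; apply: functional_extensionality => g.
  by have [p <-] := hsurj g; rewrite psiE psi'E.
Qed.
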